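(* Let $\alpha,b,\beta>0$ with $\alpha<\frac d2$, and let $x_1,\dots,x_n\in\mathbb{R}^d$ span $\mathbb{R}^d$ and satisfy, for every subspace $L\subset\mathbb{R}^d$ of dimension $1\le d_L<d$, $$\frac{|\{i: x_i\in L\}|}{n}<\frac{d_L}{d-2\alpha}.$$ Then the Kotz log-likelihood $\mathcal{L}(S)=-\frac n2\log\det S+\sum_{i=1}^n\log\varphi(x_i^TS^{-1}x_i)$ with $\varphi(t)=t^{\alpha-d/2}\exp(-(t/b)^\beta)$ attains its maximum over $S\in\mathbb{P}_d$.
   Context: $\mathbb{P}_d$ denotes $d\times d$ real symmetric positive definite matrices. *)

From HB Require Import structures.
From mathcomp Require Import all_boot all_order all_algebra.
From mathcomp Require Import all_classical all_reals all_analysis.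
Set Implicit Arguments. Unset Strict Implicit. Unset Printing Implicit Defensive.
Import Order.TTheory GRing.Theory Num.Theory.
Local Open Scope ring_scope.

Definition posdef (R : realType) (d : nat) (S : 'M[R]_d) : Prop :=
  S^T = S /\ forall v : 'rV[R]_d, v != 0 -> 0 < (v *m S *m v^T) 0 0.

Definition kotz_phi (R : realType) (d : nat) (alpha b beta : R) (t : R) : R :=
  t `^ (alpha - d%:R / 2) * expR (- ((t / b) `^ beta)).

(* Kotz log-likelihood; the data x_1..x_n are the rows of X *)
Definition kotz_loglik (R : realType) (d n : nat) (alpha b beta : R)
    (X : 'M[R]_(n, d)) (S : 'M[R]_d) : R :=
  - (n%:R / 2) * ln (\det S)
  + \sum_(i < n) ln (kotz_phi d alpha b beta ((row i X *m invmx S *m (row i X)^T) 0 0)).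

(* Pass to the precision matrix V = S^-1: with t_i = x_i V x_i^T the
   log-likelihood becomes
     F(V) = n/2 ln det V + (alpha - d/2) sum_i ln t_i - sum_i (t_i / b)^beta.
   The subspace condition provides a slope w with (d - 2 alpha)/n < w < d/n and
   w |J| <= rank {x_i | i in J} for every J. A greedy basis of data points and
   the bound det (Y V Y^T) <= d! prod_k (y_k V y_k^T) then give
     ln det V <= C + w sum_i ln t_i + (d - w n) max_i ln t_i,
   hence F(V) <= C' + sum_i (p ln t_i - (t_i / b)^beta) + q max_i ln t_i with
   p, q > 0. On the superlevel set {F >= F(1)} every t_i therefore lies in a
   fixed interval [lo, hi] with lo > 0, det V stays away from 0, and, the x_i
   spanning R^d, the entries of V are bounded. So this set lies in a compact
   set of positive definite matrices on which F is continuous, and F attains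
   its maximum there. *)

From HB Require Import structures.
From mathcomp Require Import all_boot all_order all_algebra.
From mathcomp Require Import all_classical all_reals all_analysis.
From mathcomp Require Import ring lra zify.
From mathcomp Require Import perm.
From mathcomp Require polyrcf.
Import Order.TTheory GRing.Theory Num.Theory.
Import numFieldTopology.Exports numFieldNormedType.Exports.
Local Open Scope ring_scope.

Set Implicit Arguments.
Unset Strict Implicit.
Unset Printing Implicit Defensive.

Section RealFacts.
Variable R : realType.

Lemma ln_prod (I : Type) (r : seq I) (P : pred I) (F : I -> R) :
  (forall i, P i -> 0 < F i) ->
  ln (\prod_(i <- r | P i) F i) = \sum_(i <- r | P i) ln (F i).
Proof.
move=> F_gt0; elim: r => [|a r IH]; first by rewrite !big_nil ln1.
rewrite !big_cons; case: ifP => // Pa.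
by rewrite lnM ?posrE ?F_gt0 ?prodr_gt0 // IH.
Qed.

Lemma ltr_pdiv_cross (x y p q : R) :
  0 < p -> 0 < q -> (x / p < y / q) = (x * q < y * p).
Proof. by move=> p0 q0; rewrite ltr_pdivlMr // mulrAC ltr_pdivrMr. Qed.

Lemma ler_sum_term (I : finType) (F : I -> R) j :
  (forall i, 0 <= F i) -> F j <= \sum_i F i.
Proof. by move=> F_ge0; rewrite (bigD1 j) //= lerDl sumr_ge0. Qed.

Lemma ler_sum_term_add (I : finType) (F : I -> R) (K : R) j :
  0 <= K -> (forall i, F i <= K) -> \sum_i F i <= F j + #|I|%:R * K.
Proof.
move=> K_ge0 FK; rewrite (bigD1 j) //= lerD2l.
apply: (@le_trans _ _ (\sum_(i | i != j) K)); first exact: ler_sum.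
by rewrite mulr_natl -sumr_const [leRHS](bigD1 j) //= lerDr.
Qed.

(* In [y = ln (t / b)] the function is [c y - k e^(beta y)] up to a constant;
   apply [e^z >= 1 + z] at [z = beta y - ln (c / (k beta))]. *)
Lemma ln_sub_expR_bounded (c k beta b : R) :
  0 < c -> 0 < k -> 0 < beta -> 0 < b ->
  exists K, forall t, 0 < t -> c * ln t - k * expR (beta * ln (t / b)) <= K.
Proof.
move=> c0 k0 beta0 b0; set mu := ln (c / (k * beta)).
exists (c * ln b + c / beta * (mu - 1)) => t t0.
set y := ln (t / b).
have -> : ln t = y + ln b by rewrite /y ln_div ?posrE // subrK.
have emu : expR mu = c / (k * beta) by rewrite lnK // posrE divr_gt0 // mulr_gt0.
have -> : expR (beta * y) = expR (beta * y - mu) * expR mu by rewrite -expRD subrK.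
set E := expR (beta * y - mu).
have E_ge : 1 + (beta * y - mu) <= E := expR_ge1Dx _.
have -> : k * (E * expR mu) = E * (c / beta).
  by rewrite emu; field; rewrite !gt_eqF.
set q := c / beta; have q0 : 0 < q by rewrite divr_gt0.
have -> : c = q * beta by rewrite divfK // gt_eqF.
have : 0 <= q * (E - (1 + (beta * y - mu))).
  by apply: mulr_ge0; [exact: ltW | rewrite subr_ge0].
lra.
Qed.

End RealFacts.

Section PositiveDefinite.
Variables (R : realType) (d : nat).
Implicit Types (V : 'M[R]_d) (x y v : 'rV[R]_d).

Definition bform V x y : R := (x *m V *m y^T) 0 0.

Lemma bform_sym V x y : V^T = V -> bform V x y = bform V y x.
Proof.
move=> VT; rewrite /bform -[in LHS](trmxK (x *m V *m y^T)) [in LHS]mxE.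
by rewrite !trmx_mul trmxK VT mulmxA.
Qed.

Lemma bformDl V x y z : bform V (x + y) z = bform V x z + bform V y z.
Proof. by rewrite /bform !mulmxDl mxE. Qed.

Lemma bformDr V x y z : bform V z (x + y) = bform V z x + bform V z y.
Proof. by rewrite /bform linearD /= mulmxDr mxE. Qed.

Lemma bformZl V a x y : bform V (a *: x) y = a * bform V x y.
Proof. by rewrite /bform -!scalemxAl mxE. Qed.

Lemma bformZr V a x y : bform V y (a *: x) = a * bform V y x.
Proof. by rewrite /bform linearZ /= -scalemxAr mxE. Qed.

Lemma bform0r V x : bform V x 0 = 0.
Proof. by rewrite /bform trmx0 mulmx0 mxE. Qed.

Lemma bform_expand V x y l : V^T = V ->
  bform V (x + l *: y) (x + l *: y)
  = bform V x x + 2 * l * bform V x y + l ^+ 2 * bform V y y.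
Proof.
move=> VT; rewrite bformDl !bformDr !bformZl !bformZr (bform_sym x y VT).
by rewrite expr2; ring.
Qed.

Lemma posdef_bform_ge0 V v : posdef V -> 0 <= bform V v v.
Proof.
case=> _ pV; have [->|v0] := eqVneq v 0; first by rewrite bform0r.
exact/ltW/pV.
Qed.

Lemma posdef_bform_gt0 V v : posdef V -> v != 0 -> 0 < bform V v v.
Proof. by case=> _; apply. Qed.

Lemma posdef_bform_CS V x y : posdef V ->
  bform V x y ^+ 2 <= bform V x x * bform V y y.
Proof.
move=> pV; have [->|y0] := eqVneq y 0; first by rewrite !bform0r expr0n mulr0.
have C0 := posdef_bform_gt0 pV y0.
set A := bform V x x; set B := bform V x y; set C := bform V y y.
have := posdef_bform_ge0 (x + (- B / C) *: y) pV.
rewrite bform_expand; last by case: pV.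
have -> : A + 2 * (- B / C) * B + (- B / C) ^+ 2 * C = A - B ^+ 2 / C.
  by field; rewrite gt_eqF.
by rewrite subr_ge0 ler_pdivrMr.
Qed.

(* If [v V v^T = 0] then [v V w^T = 0] for every [w], since otherwise
   [v + l w] has negative square for a suitable [l]; hence [v V = 0]. *)
Lemma psd_unitmx_posdef V : V^T = V -> (forall v, 0 <= bform V v v) ->
  V \in unitmx -> posdef V.
Proof.
move=> VT psd Vu; split => // v v0.
rewrite -/(bform V v v) lt_def psd andbT; apply/negP => /eqP vv0.
have vw0 w : bform V v w = 0.
  set B := bform V v w; set C := bform V w w.
  have C0 : 0 <= C := psd w.
  have := psd (v + (- B / (C + 1)) *: w).
  rewrite bform_expand // vv0 -/B -/C.
  have -> : 0 + 2 * (- B / (C + 1)) * B + (- B / (C + 1)) ^+ 2 * C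
            = - (B ^+ 2 * (C + 2)) / (C + 1) ^+ 2.
    by field; rewrite gt_eqF // ltr_wpDl.
  rewrite pmulr_lge0 ?invr_gt0 ?exprn_gt0 ?ltr_wpDl // oppr_ge0 pmulr_lle0.
    by move=> B2; apply/eqP; rewrite -sqrf_eq0 eq_le B2 sqr_ge0.
  by rewrite ltr_wpDl.
have vV : v *m V = 0.
  apply/rowP => j; have := vw0 (delta_mx 0 j).
  rewrite /bform mxE (bigD1 j) //= big1 => [|k kj]; last first.
    by rewrite !mxE (negbTE kj) andbF mulr0.
  by rewrite !mxE !eqxx mulr1 addr0 => ->.
by move: v0; rewrite -(mulmxK Vu v) vV mul0mx eqxx.
Qed.

Lemma posdef_unitmx V : posdef V -> V \in unitmx.
Proof.
move=> pV; rewrite -row_free_unit -kermx_eq0; apply/eqP/row_matrixP => i.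
rewrite row0; apply/eqP; apply: contraT => ri0.
have := posdef_bform_gt0 pV ri0; rewrite /bform.
have -> : row i (kermx V) *m V = 0 by apply/eqP; rewrite -sub_kermx row_sub.
by rewrite mul0mx mxE ltxx.
Qed.

Lemma mulmx_tr_ge0 v : 0 <= (v *m v^T) 0 0.
Proof. by rewrite mxE sumr_ge0 // => j _; rewrite mxE -expr2 sqr_ge0. Qed.

Lemma mulmx_tr_gt0 v : v != 0 -> 0 < (v *m v^T) 0 0.
Proof.
move=> v0; rewrite lt_def mulmx_tr_ge0 andbT mxE; apply: contra v0.
rewrite psumr_eq0 => [/allP vj0|j _]; last by rewrite mxE -expr2 sqr_ge0.
apply/eqP/rowP => j; have := vj0 j (mem_index_enum _).
by rewrite mxE -expr2 sqrf_eq0 !mxE => /eqP.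
Qed.

Lemma posdef_add_scalar V (mu : R) : posdef V -> 0 <= mu -> posdef (mu%:M + V).
Proof.
move=> pV mu0; split; first by rewrite linearD /= tr_scalar_mx; case: pV => ->.
move=> v v0; rewrite -/(bform _ v v).
have -> : bform (mu%:M + V) v v = mu * (v *m v^T) 0 0 + bform V v v.
  by rewrite /bform mulmxDr mulmxDl mul_mx_scalar -scalemxAl !mxE.
by apply: ltr_wpDl; [rewrite mulr_ge0 ?mulmx_tr_ge0 | exact: posdef_bform_gt0].
Qed.

Lemma posdef1 : posdef (1%:M : 'M[R]_d).
Proof.
by split=> [|v v0]; [rewrite tr_scalar_mx | rewrite mulmx1 mulmx_tr_gt0].
Qed.

(* [mu |-> det (mu + V)] is the characteristic polynomial of [-V]: it is monic
   and, [mu + V] being invertible, has no root in [0, +oo[, so it is positive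
   at [0]. *)
Lemma posdef_det_gt0 V : posdef V -> 0 < \det V.
Proof.
move=> pV; pose p := char_poly (- V).
have p_det (mu : R) : p.[mu] = \det (mu%:M + V).
  rewrite /p /char_poly -horner_evalE -det_map_mx; congr (\det _).
  apply/matrixP => i j; rewrite !mxE /= horner_evalE.
  by rewrite hornerD hornerN hornerMn hornerX hornerC opprK.
have no_root : {in `[0, +oo[, forall z : R, ~~ root p z}.
  move=> z; rewrite in_itv /= andbT => z0; rewrite /root p_det.
  by have := posdef_unitmx (posdef_add_scalar pV z0); rewrite unitmxE unitfE.
have /(_ 0) := polyrcf.sgp_pinftyP no_root; rewrite in_itv /= lexx => /(_ isT).
rewrite /polyrcf.sgp_pinfty (monicP (char_poly_monic _)) sgr1 p_det.
by rewrite -scalemx1 scale0r add0r => h; rewrite -sgr_gt0 h ltr01.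
Qed.

Lemma posdef_invmx V : posdef V -> posdef (invmx V).
Proof.
move=> pV; have Vu := posdef_unitmx pV; case: (pV) => VT _.
split=> [|v v0]; first by rewrite trmx_inv VT.
set w := v *m invmx V.
have w0 : w != 0 by apply: contraNneq v0 => w0; rewrite -(mulmxKV Vu v) -/w w0 mul0mx.
have := posdef_bform_gt0 pV w0.
rewrite /bform /w trmx_mul trmx_inv VT.
by rewrite -!mulmxA (mulmxA V) mulmxV // mul1mx.
Qed.

Lemma gram_mxE m V (Y : 'M[R]_(m, d)) i j :
  (Y *m V *m Y^T) i j = bform V (row i Y) (row j Y).
Proof. by rewrite /bform -row_mul !mxE; apply: eq_bigr => k _; rewrite !mxE. Qed.

(* Each of the [d!] terms of the Leibniz expansion is bounded, by
   Cauchy-Schwarz, by the product of the diagonal entries. *)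
Lemma det_gram_le V (Y : 'M[R]_d) : posdef V ->
  \det (Y *m V *m Y^T) <= d`!%:R * \prod_k bform V (row k Y) (row k Y).
Proof.
move=> pV; set A := Y *m V *m Y^T; set c := \prod_k bform V (row k Y) (row k Y).
have c0 : 0 <= c by apply: prodr_ge0 => k _; exact: posdef_bform_ge0.
have Aii i : A i i = bform V (row i Y) (row i Y) by rewrite gram_mxE.
rewrite [\det _]/determinant -card_Sn mulr_natl -sumr_const.
apply: ler_sum => s _; apply: le_trans (ler_norm _) _.
rewrite normrM normrX normrN1 expr1n mul1r -(ler_pXn2r (n := 2)) ?nnegrE //.
have -> : c ^+ 2 = \prod_i (A i i * A (s i) (s i)).
  rewrite big_split /= expr2; congr (_ * _); first by apply: eq_bigr => i _.
  by rewrite /c (reindex_inj (@perm_inj _ s)); apply: eq_bigr => i _.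
rewrite normr_prod -prodrXl; apply: ler_prod => i _.
by rewrite sqr_ge0 real_normK ?num_real // !gram_mxE posdef_bform_CS.
Qed.

Lemma ln_det_le_basis V (Y : 'M[R]_d) : posdef V -> \det Y != 0 ->
  ln (\det V) <= ln d`!%:R - ln (\det Y ^+ 2) + \sum_k ln (bform V (row k Y) (row k Y)).
Proof.
move=> pV detY_neq0; have detV_gt0 := posdef_det_gt0 pV.
have rowY_neq0 k : row k Y != 0.
  apply: contra detY_neq0 => /eqP Yk0.
  rewrite -[_ == 0]negbK -unitfE -unitmxE -row_free_unit.
  by apply/row_freePn; exists k; rewrite Yk0 sub0mx.
have bform_gt0 k : 0 < bform V (row k Y) (row k Y).
  exact: posdef_bform_gt0 (rowY_neq0 k).
have detY2_pos : \det Y ^+ 2 \is Num.pos.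
  by rewrite posrE lt_def sqr_ge0 sqrf_eq0 detY_neq0.
have fact_pos : d`!%:R \is @Num.pos R by rewrite posrE ltr0n fact_gt0.
have prod_pos : \prod_k bform V (row k Y) (row k Y) \is Num.pos.
  by rewrite posrE prodr_gt0.
have := det_gram_le Y pV; rewrite !det_mulmx det_tr mulrAC -expr2.
rewrite -ler_ln ?(rpredM detY2_pos) ?(rpredM fact_pos) ?posrE //.
rewrite (lnM detY2_pos) ?posrE // (lnM fact_pos) // ln_prod //.
lra.
Qed.

End PositiveDefinite.

Section RowsOn.
Variables (R : realFieldType) (n d : nat) (X : 'M[R]_(n, d)).
Implicit Types (B J : {set 'I_n}).

Definition rows_on J : 'M[R]_(n, d) := \matrix_(i, j) (if i \in J then X i j else 0).

Definition rank_on J := \rank (rows_on J).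

Lemma row_rows_on i J : row i (rows_on J) = if i \in J then row i X else 0.
Proof. by apply/rowP => j; rewrite !mxE; case: (i \in J); rewrite ?mxE. Qed.

Lemma rows_on_submx m J (A : 'M[R]_(m, d)) :
  (forall i, i \in J -> (row i X <= A)%MS) -> (rows_on J <= A)%MS.
Proof.
move=> JA; apply/row_subP => i; rewrite row_rows_on.
by case: ifP => iJ; [exact: JA | exact: sub0mx].
Qed.

Lemma row_sub_rows_on i J : i \in J -> (row i X <= rows_on J)%MS.
Proof. by move=> iJ; have := row_sub i (rows_on J); rewrite row_rows_on iJ. Qed.

Lemma rows_onS B J : B \subset J -> (rows_on B <= rows_on J)%MS.
Proof.
by move=> /fintype.subsetP BJ; apply: rows_on_submx => i /BJ; exact: row_sub_rows_on.
Qed.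

Lemma rank_onS B J : B \subset J -> (rank_on B <= rank_on J)%N.
Proof. by move=> BJ; exact/mxrankS/rows_onS. Qed.

Lemma rank_on0 : rank_on finset.set0 = 0%N.
Proof.
by rewrite /rank_on (_ : rows_on _ = 0) ?mxrank0 //; apply/matrixP => i j; rewrite !mxE inE.
Qed.

Lemma rank_onT : rank_on [set: 'I_n] = \rank X.
Proof. by rewrite /rank_on; congr (\rank _); apply/matrixP => i j; rewrite !mxE inE. Qed.

Lemma rank_on_setD1 J m : m \in J ->
  rank_on J = rank_on (J :\ m) \/ rank_on J = (rank_on (J :\ m)).+1.
Proof.
move=> mJ; have le_rank := rank_onS (subsetDl J [set m]).
suff : (rank_on J <= rank_on (J :\ m) + 1)%N by lia.
have : (rows_on J <= rows_on (J :\ m) + row m X)%MS.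
  apply: rows_on_submx => i iJ; have [->|im] := eqVneq i m; first exact: addsmxSr.
  by apply: submx_trans (addsmxSl _ _); apply: row_sub_rows_on; rewrite !inE im.
move/mxrankS/leq_trans; apply; apply: leq_trans (mxrank_adds_leqif _ _).1 _.
by rewrite leq_add2l rank_leq_row.
Qed.

Lemma rank_on_setU1 B J m : m \in J -> B \subset J :\ m ->
  rank_on B = rank_on (J :\ m) -> rank_on (m |: B) = rank_on J.
Proof.
move=> mJ BJ rankB; have mBJ : m |: B \subset J.
  by rewrite finset.subUset finset.sub1set mJ (fintype.subset_trans BJ) ?subsetDl.
apply/eqP; rewrite eqn_leq rank_onS //=; apply/mxrankS/rows_on_submx => i iJ.
have [->|im] := eqVneq i m; first by rewrite row_sub_rows_on // setU11.
have /andP[_ JB] : (rows_on B == rows_on (J :\ m))%MS.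
  by have [_ <-] := mxrank_leqif_eq (rows_onS BJ); rewrite -!/(rank_on _) rankB.
apply: submx_trans (row_sub_rows_on _) (submx_trans JB (rows_onS (finset.subsetUr _ _))).
by rewrite !inE im.
Qed.

(* Peel off a maximiser [m] of [s] on [J] and recurse on [J :\ m]: if [m]
   raises the rank it joins the basis, otherwise the slack
   [rank_on J - w #|J|], which is nonnegative, absorbs the bound [s m <= M]. *)
Lemma basis_sum_le (s : 'I_n -> R) (w : R) :
  (forall J, w * #|J|%:R <= (rank_on J)%:R) ->
  forall J M, (forall i, i \in J -> s i <= M) ->
  exists B, [/\ B \subset J, #|B| = rank_on J, rank_on B = #|B| &
    \sum_(i in B) s i <= w * \sum_(i in J) s i + ((rank_on J)%:R - w * #|J|%:R) * M].
Proof.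
move=> w_le J; have [k] := ubnP #|J|; elim: k J => // k IH J cardJ M sM.
have [->|[i0 i0J]] := set_0Vmem J.
  exists finset.set0; rewrite finset.sub0set cards0 rank_on0 !big_set0.
  by split => //; rewrite !mulr0 subr0 mul0r addr0.
pose m := [arg max_(i > i0 in J) s i]%O.
have [mJ s_max] : m \in J /\ forall i, i \in J -> s i <= s m.
  by rewrite /m; case: arg_maxP => // j jJ h; split => // i /h.
set J' := J :\ m.
have cardJ' : #|J| = (#|J'|).+1 by rewrite (cardsD1 m J) mJ.
have ltJ' : (#|J'| < k)%N by rewrite -ltnS -cardJ'.
have sJ' i : i \in J' -> s i <= s m by move=> /setD1P[_ /s_max].
have [B [BJ' cardB rankB sumB]] := IH J' ltJ' (s m) sJ'.
have sumJ : \sum_(i in J) s i = s m + \sum_(i in J') s i by rewrite (big_setD1 m).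
have slack : 0 <= (rank_on J)%:R - w * #|J|%:R by rewrite subr_ge0.
have smM : ((rank_on J)%:R - w * #|J|%:R) * s m <= ((rank_on J)%:R - w * #|J|%:R) * M.
  by rewrite ler_wpM2l ?sM.
have BJ : B \subset J by rewrite (fintype.subset_trans BJ') ?subsetDl.
have [rJ|rJ] := rank_on_setD1 mJ.
  exists B; split => //; first by rewrite rJ.
  by move: sumB smM; rewrite sumJ cardJ' rJ -/J' -!natr1; lra.
have mB : m \notin B by apply: contraTN isT => /(fintype.subsetP BJ'); rewrite !inE eqxx.
have cardmB : #|m |: B| = rank_on J by rewrite cardsU1 mB add1n cardB rJ.
exists (m |: B); split => //.
- by rewrite finset.subUset finset.sub1set mJ.
- by rewrite cardmB (rank_on_setU1 mJ BJ') // rankB.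
- by move: sumB smM; rewrite sumJ big_setU1 //= cardJ' rJ -/J' -!natr1; lra.
Qed.

End RowsOn.

Section Continuity.
Local Open Scope classical_set_scope.
Variables (R : realType) (T : topologicalType).

Lemma continuous_sum (I : Type) (r : seq I) (P : pred I) (F : I -> T -> R) x :
  (forall i, {for x, continuous (F i)}) ->
  {for x, continuous (fun y => \sum_(i <- r | P i) F i y)}.
Proof.
move=> F_cont; rewrite -fct_sumE; elim/big_ind: _ => // [|f g fx gx].
- exact: cst_continuous.
- exact: continuousD.
Qed.

Lemma continuous_prod (I : Type) (r : seq I) (P : pred I) (F : I -> T -> R) x :
  (forall i, {for x, continuous (F i)}) ->
  {for x, continuous (fun y => \prod_(i <- r | P i) F i y)}.
Proof.
move=> F_cont; rewrite -fct_prodE; elim/big_ind: _ => // [|f g fx gx].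
- exact: cst_continuous.
- exact: continuousM.
Qed.

Lemma closed_le_fun (f g : T -> R) :
  continuous f -> continuous g -> closed [set x | f x <= g x].
Proof.
move=> f_cont g_cont.
have -> : [set x | f x <= g x] = (fun x => g x - f x) @^-1` [set z | 0 <= z].
  by apply/seteqP; split => x /=; rewrite subr_ge0.
apply: (proj1 (continuous_closedP _)); last exact: closed_ge.
by move=> x; apply: continuousB; [exact: g_cont | exact: f_cont].
Qed.

Lemma closed_forall (I : Type) (P : I -> set T) :
  (forall i, closed (P i)) -> closed [set x | forall i, P i x].
Proof.
move=> P_closed; have -> : [set x | forall i, P i x] = \bigcap_(i in setT) P i.
  by apply/seteqP; split => [x Px i _ | x Px i]; [exact: Px | apply: Px].
exact: closed_bigI.
Qed.

End Continuity.

Section PosdefBox.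
Local Open Scope classical_set_scope.
Variables (R : realType) (d : nat).
Local Notation U := 'rV[R]_(d * d).

Lemma vec_mx_entry_continuous k l : continuous (fun u : U => vec_mx u k l).
Proof.
have -> : (fun u : U => vec_mx u k l) = (fun u => u 0 (mxvec_index k l)).
  by apply: funext => u; rewrite mxE.
exact: coord_continuous.
Qed.

Lemma bform_vec_mx_continuous (v w : 'rV[R]_d) :
  continuous (fun u : U => bform (vec_mx u) v w).
Proof.
have -> : (fun u : U => bform (vec_mx u) v w)
          = (fun u => \sum_j (\sum_i v 0 i * vec_mx u i j) * w 0 j).
  apply: funext => u; rewrite /bform !mxE; apply: eq_bigr => j _; rewrite !mxE.
  by congr (_ * _); apply: eq_bigr => i _; rewrite !mxE.
move=> u; apply: continuous_sum => j; apply: continuousM; last exact: cst_continuous.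
apply: continuous_sum => i; apply: continuousM; first exact: cst_continuous.
exact: vec_mx_entry_continuous.
Qed.

Lemma det_vec_mx_continuous : continuous (fun u : U => \det (vec_mx u)).
Proof.
move=> u; apply: continuous_sum => s; apply: continuousM; first exact: cst_continuous.
by apply: continuous_prod => i; exact: vec_mx_entry_continuous.
Qed.

(* A compact set of vectorised positive definite matrices: the bound
   [delta <= det] keeps it away from the singular ones. *)
Definition posdef_box (delta Bd : R) : set U :=
  [set u | forall k l, vec_mx u k l <= vec_mx u l k] `&`
  [set u | forall v, 0 <= bform (vec_mx u) v v] `&`
  [set u | delta <= \det (vec_mx u)] `&`
  [set u | forall k l, `|vec_mx u k l| <= Bd].

Lemma posdef_box_posdef delta Bd u :
  0 < delta -> posdef_box delta Bd u -> posdef (vec_mx u).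
Proof.
move=> delta_gt0 [[[sym psd] det_ge] _]; apply: psd_unitmx_posdef => //.
  by apply/matrixP => k l; rewrite mxE; apply/eqP; rewrite eq_le !sym.
by rewrite unitmxE unitfE gt_eqF // (lt_le_trans delta_gt0).
Qed.

Lemma mxvec_posdef_box delta Bd V : posdef V -> delta <= \det V ->
  (forall k l, `|V k l| <= Bd) -> posdef_box delta Bd (mxvec V).
Proof.
move=> pV det_ge entry_le; rewrite /posdef_box /= mxvecK.
split; [split; [split|] |] => //; last by move=> v; exact: posdef_bform_ge0.
by move=> k l; case: pV => VT _; rewrite -{1}VT mxE.
Qed.

Lemma compact_posdef_box delta Bd : compact (posdef_box delta Bd).
Proof.
apply: bounded_closed_compact.
  apply: filterS (nbhs_pinfty_gt (num_real (Num.max Bd 0))) => M BdM u [_ u_le].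
  apply: le_trans (ltW BdM); rewrite [leLHS]/Num.norm /= mx_normrE.
  apply/bigmax_leP; split => [|[i j] _]; first by rewrite le_max lexx orbT.
  rewrite (ord1 i) le_max; case/mxvec_indexP: j => k l.
  by have := u_le k l; rewrite mxE => ->.
repeat apply: closedI.
- do 2 apply: closed_forall => ?.
  by apply: closed_le_fun; exact: vec_mx_entry_continuous.
- apply: closed_forall => v.
  by apply: closed_le_fun; [exact: cst_continuous | exact: bform_vec_mx_continuous].
- by apply: closed_le_fun; [exact: cst_continuous | exact: det_vec_mx_continuous].
- do 2 apply: closed_forall => ?; apply: closed_le_fun; last exact: cst_continuous.
  move=> u; apply: continuous_comp; first exact: vec_mx_entry_continuous.
  exact: norm_continuous.
Qed.

End PosdefBox.

Section Kotz.
Variables (R : realType) (d n : nat) (alpha b beta : R) (X : 'M[R]_(n, d)).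
Implicit Types (V : 'M[R]_d) (J : {set 'I_n}).
Hypotheses (alpha_gt0 : 0 < alpha) (b_gt0 : 0 < b) (beta_gt0 : 0 < beta).
Hypothesis alpha_lt : alpha < d%:R / 2.
Hypothesis rowX_neq0 : forall i, row i X != 0.
Hypothesis rankX : \rank X = d.
Hypothesis subspace_frac_lt : forall L : 'M[R]_d,
  (1 <= \rank L)%N -> (\rank L < d)%N ->
  #|[set i : 'I_n | (row i X <= L)%MS]|%:R / n%:R < (\rank L)%:R / (d%:R - 2 * alpha).

Definition mahal V i := bform V (row i X) (row i X).

Definition mahal_pow V i := expR (beta * ln (mahal V i / b)).

Definition precision_loglik V := n%:R / 2 * ln (\det V)
  + (alpha - d%:R / 2) * \sum_i ln (mahal V i) - \sum_i mahal_pow V i.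

Lemma mahal_gt0 V i : posdef V -> 0 < mahal V i.
Proof. by move=> pV; exact: posdef_bform_gt0. Qed.

Lemma kotz_loglik_precision T :
  posdef T -> kotz_loglik alpha b beta X T = precision_loglik (invmx T).
Proof.
move=> pT; have pTi := posdef_invmx pT.
rewrite /kotz_loglik /precision_loglik det_inv lnV ?posrE ?posdef_det_gt0 //.
rewrite mulrN -mulNr -addrA mulr_sumr -sumrB; congr (_ + _); apply: eq_bigr => i _.
rewrite -/(bform _ (row i X) (row i X)) -/(mahal _ i).
have t_gt0 := mahal_gt0 i pTi.
rewrite /kotz_phi lnM ?posrE ?powR_gt0 ?expR_gt0 // expRK ln_powR.
by rewrite /powR (gt_eqF (divr_gt0 t_gt0 b_gt0)).
Qed.

Lemma dim_gt0 : (0 < d)%N.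
Proof. by rewrite lt0n; apply: contraTneq alpha_lt => ->; rewrite mul0r ltNge ltW. Qed.

Lemma nobs_gt0 : (0 < n)%N.
Proof. by rewrite (leq_trans dim_gt0) // -rankX rank_leq_row. Qed.

Lemma dim_sub_gt0 : 0 < d%:R - 2 * alpha.
Proof. by rewrite subr_gt0 -ltr_pdivlMl // mulrC. Qed.

Lemma rank_on_ratio_gt J : J != finset.set0 ->
  (d%:R - 2 * alpha) / n%:R < (rank_on X J)%:R / #|J|%:R.
Proof.
move=> /set0Pn[i iJ]; have n_gt0 : 0 < n%:R :> R by rewrite ltr0n nobs_gt0.
have J_gt0 : 0 < #|J|%:R :> R by rewrite ltr0n (cardD1 i) iJ.
have [rank_lt|rank_ge] := ltnP (rank_on X J) d.
  have rank_gt0 : (0 < rank_on X J)%N.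
    by rewrite (leq_trans _ (mxrankS (row_sub_rows_on X iJ))) // lt0n mxrank_eq0.
  have := subspace_frac_lt (L := <<rows_on X J>>%MS); rewrite genmxE.
  move=> /(_ rank_gt0 rank_lt); rewrite !ltr_pdiv_cross ?dim_sub_gt0 //.
  apply: le_lt_trans; rewrite mulrC ler_pM2r ?dim_sub_gt0 // ler_nat.
  apply/subset_leq_card/fintype.subsetP => k kJ.
  by rewrite inE genmxE row_sub_rows_on.
have -> : rank_on X J = d by apply/eqP; rewrite eqn_leq rank_ge rank_leq_col.
apply: (@lt_le_trans _ _ (d%:R / n%:R)).
  by rewrite ltr_pM2r ?invr_gt0 // gtrBl mulr_gt0.
rewrite ler_pM2l ?ltr0n ?dim_gt0 // lef_pV2 ?posrE // ler_nat.
by rewrite (leq_trans (max_card J)) // card_ord.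
Qed.

Lemma exists_rank_slope : exists w, [/\ (d%:R - 2 * alpha) / n%:R < w,
  n%:R * w < d%:R & forall J, w * #|J|%:R <= (rank_on X J)%:R].
Proof.
have n_gt0 : 0 < n%:R :> R by rewrite ltr0n nobs_gt0.
set w0 := (d%:R - 2 * alpha) / n%:R.
set m := \big[Order.min/(d%:R / n%:R)]_(J | J != finset.set0)
           ((rank_on X J)%:R / #|J|%:R : R).
have w0_lt_m : w0 < m.
  apply: lt_bigmin => [|J J0]; last exact: rank_on_ratio_gt.
  by rewrite ltr_pM2r ?invr_gt0 // gtrBl mulr_gt0.
have m_le : m <= d%:R / n%:R by apply: bigmin_le_id.
have [w0_lt_w w_lt_m] := midf_lt w0_lt_m.
exists ((w0 + m) / 2); split => //.
  by rewrite -ltr_pdivlMl // [_^-1 * _]mulrC (lt_le_trans w_lt_m).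
move=> J; have [->|J0] := eqVneq J finset.set0; first by rewrite cards0 mulr0.
have : m <= (rank_on X J)%:R / #|J|%:R by apply: bigmin_le_cond.
rewrite ler_pdivlMr ?ltr0n ?lt0n ?cards_eq0 // => /(le_trans _); apply.
by rewrite ler_wpM2r ?ler0n ?ltW.
Qed.

Lemma ln_det_le w : (forall J, w * #|J|%:R <= (rank_on X J)%:R) ->
  exists C, forall V, posdef V -> exists m : 'I_n,
    ln (\det V) <= C + w * \sum_i ln (mahal V i) + (d%:R - w * n%:R) * ln (mahal V m).
Proof.
move=> w_le; pose i0 := Ordinal nobs_gt0.
pose Y (B : {set 'I_n}) : 'M[R]_d := \matrix_(k < d) row (nth i0 (enum B) k) X.
exists (ln d`!%:R + \sum_(B : {set 'I_n}) `|ln (\det (Y B) ^+ 2)|) => V pV.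
pose m := [arg max_(i > i0) ln (mahal V i)]%O.
have m_max i : ln (mahal V i) <= ln (mahal V m).
  by rewrite /m; case: arg_maxP => // j _; apply.
exists m; have [B [_ cardB rankB sumB]] :=
  basis_sum_le w_le (J := [set: 'I_n]) (M := ln (mahal V m)) (fun i _ => m_max i).
have sumT : \sum_(i in [set: 'I_n]) ln (mahal V i) = \sum_i ln (mahal V i).
  by apply: eq_bigl => i; rewrite inE.
rewrite rank_onT rankX cardsT card_ord sumT in cardB sumB.
have size_enumB : size (enum B) = d by rewrite -cardE cardB.
have rowY k : row k (Y B) = row (nth i0 (enum B) k) X by rewrite rowK.
have detY_neq0 : \det (Y B) != 0.
  rewrite -unitfE -unitmxE -row_free_unit /row_free eqn_leq rank_leq_row /=.
  rewrite -{1}cardB -rankB; apply/mxrankS/rows_on_submx => i iB.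
  have ki : (index i (enum B) < d)%N by rewrite -size_enumB index_mem mem_enum.
  by rewrite -(nth_index i0 (_ : i \in enum B)) ?mem_enum // -(rowY (Ordinal ki)) row_sub.
have := ln_det_le_basis pV detY_neq0.
have -> : \sum_k ln (bform V (row k (Y B)) (row k (Y B))) = \sum_(i in B) ln (mahal V i).
  rewrite -[RHS]big_enum [RHS](big_nth i0) size_enumB big_mkord.
  by apply: eq_bigr => k _; rewrite rowY.
have : - ln (\det (Y B) ^+ 2) <= \sum_(B0 : {set 'I_n}) `|ln (\det (Y B0) ^+ 2)|.
  apply: ler_normlW; rewrite normrN.
  by apply: (ler_sum_term (F := fun B0 => `|ln (\det (Y B0) ^+ 2)|)).
lra.
Qed.

Lemma precision_loglik_le : exists C p q, [/\ 0 < p, 0 < q &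
  forall V, posdef V -> exists m : 'I_n, precision_loglik V <=
    C + (p * \sum_i ln (mahal V i) - \sum_i mahal_pow V i) + q * ln (mahal V m)].
Proof.
have [w [w_gt w_lt w_le]] := exists_rank_slope.
have [C ln_det_leC] := ln_det_le w_le.
have n_gt0 : 0 < n%:R :> R by rewrite ltr0n nobs_gt0.
exists (n%:R / 2 * C), (n%:R / 2 * w + (alpha - d%:R / 2)),
  (n%:R / 2 * (d%:R - w * n%:R)); split.
- by move: w_gt; rewrite ltr_pdivrMr // [w * _]mulrC; lra.
- by rewrite mulr_gt0 ?divr_gt0 // subr_gt0 mulrC.
move=> V pV; have [m ln_det_le_m] := ln_det_leC V pV; exists m.
rewrite /precision_loglik.
have c_ge0 : 0 <= n%:R / 2 :> R by rewrite divr_ge0 ?ler0n.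
have := ler_wpM2l c_ge0 ln_det_le_m.
set S := \sum_i ln (mahal V i); set sm := ln (mahal V m); set c := n%:R / 2.
have -> : c * (C + w * S + (d%:R - w * n%:R) * sm) =
  c * C + c * w * S + c * (d%:R - w * n%:R) * sm by ring.
lra.
Qed.

(* Half of each tail term absorbs [q ln (mahal V m)] and the other half keeps
   every summand [p ln t_i - (t_i/b)^beta / 2] bounded above, so a single very
   negative summand would force [precision_loglik V < precision_loglik 1]. *)
Lemma superlevel_term_ge : exists p L, 0 < p /\ forall V, posdef V ->
  precision_loglik 1%:M <= precision_loglik V ->
  forall j, L <= p * ln (mahal V j) - mahal_pow V j / 2.
Proof.
have [C [p [q [p_gt0 q_gt0 loglik_le]]]] := precision_loglik_le.
have half_gt0 : 0 < 1 / 2 :> R by rewrite divr_gt0.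
have [K1 K1_ge] := ln_sub_expR_bounded q_gt0 half_gt0 beta_gt0 b_gt0.
have [K2 K2_ge] := ln_sub_expR_bounded p_gt0 half_gt0 beta_gt0 b_gt0.
set K2' := Num.max K2 0; have K2'_ge0 : 0 <= K2' by rewrite le_max lexx orbT.
exists p, (precision_loglik 1%:M - C - K1 - n%:R * K2'); split => // V pV F1_le j.
have t_gt0 i : 0 < mahal V i by exact: mahal_gt0.
set g := fun i => p * ln (mahal V i) - mahal_pow V i / 2.
have [m Fm_le] := loglik_le V pV.
have sum_pow : \sum_i mahal_pow V i = \sum_i mahal_pow V i / 2 + \sum_i mahal_pow V i / 2.
  by rewrite -big_split /=; apply: eq_bigr => i _; rewrite -splitr.
have pow_m : mahal_pow V m / 2 <= \sum_i mahal_pow V i / 2.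
  by apply: ler_sum_term => i; rewrite divr_ge0 ?expR_ge0.
have sum_g : \sum_i g i = p * \sum_i ln (mahal V i) - \sum_i mahal_pow V i / 2.
  by rewrite sumrB mulr_sumr.
have K1_m : q * ln (mahal V m) - mahal_pow V m / 2 <= K1.
  by have := K1_ge _ (t_gt0 m); rewrite mul1r [_^-1 * _]mulrC.
have : \sum_i g i <= g j + #|'I_n|%:R * K2'.
  apply: ler_sum_term_add => // i; have := K2_ge _ (t_gt0 i).
  by rewrite mul1r [_^-1 * _]mulrC => /le_trans; apply; rewrite le_max lexx.
rewrite card_ord /g; lra.
Qed.

Lemma superlevel_mahal_bounds : exists lo hi, 0 < lo /\ forall V, posdef V ->
  precision_loglik 1%:M <= precision_loglik V -> forall i, lo <= mahal V i <= hi.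
Proof.
have [p [L [p_gt0 term_ge]]] := superlevel_term_ge.
have quarter_gt0 : 0 < 1 / 4 :> R by rewrite divr_gt0.
have [K K_ge] := ln_sub_expR_bounded p_gt0 quarter_gt0 beta_gt0 b_gt0.
exists (expR (L / p)), (b * expR (ln (4 * (K - L)) / beta)).
split=> [|V pV F1_le i]; first exact: expR_gt0.
have t_gt0 := mahal_gt0 i pV; have pow_gt0 : 0 < mahal_pow V i := expR_gt0 _.
have := term_ge V pV F1_le i; have := K_ge _ t_gt0; rewrite -/(mahal_pow V i).
move=> K_ge_i L_le; apply/andP; split.
  rewrite -[mahal V i]lnK ?posrE // ler_expR ler_pdivrMr // mulrC.
  by apply: le_trans L_le _; rewrite gerBl divr_ge0 ?ltW.
have pow_le : mahal_pow V i <= 4 * (K - L) by lra.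
have : ln (mahal_pow V i) <= ln (4 * (K - L)).
  by rewrite ler_ln ?posrE // (lt_le_trans pow_gt0).
rewrite /mahal_pow expRK => ln_le.
have : mahal V i / b <= expR (ln (4 * (K - L)) / beta).
  by rewrite -[mahal V i / b]lnK ?posrE ?divr_gt0 // ler_expR ler_pdivlMr // mulrC.
by rewrite ler_pdivrMr // mulrC.
Qed.

Lemma superlevel_det_ge : exists delta, 0 < delta /\ forall V, posdef V ->
  precision_loglik 1%:M <= precision_loglik V -> delta <= \det V.
Proof.
have [lo [? [lo_gt0 mahal_bounds]]] := superlevel_mahal_bounds.
have n_gt0 : 0 < n%:R :> R by rewrite ltr0n nobs_gt0.
set F1 := precision_loglik 1%:M; set kappa := alpha - d%:R / 2.
have kappa_lt0 : kappa < 0 by rewrite subr_lt0.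
exists (expR (2 / n%:R * (F1 - n%:R * kappa * ln lo))).
split=> [|V pV F1_le]; first exact: expR_gt0.
have sum_ln_ge : n%:R * ln lo <= \sum_i ln (mahal V i).
  have -> : n%:R * ln lo = \sum_(i < n) ln lo by rewrite sumr_const card_ord mulr_natl.
  apply: ler_sum => i _.
  have /andP[lo_le _] := mahal_bounds V pV F1_le i.
  by rewrite ler_ln ?posrE // (lt_le_trans lo_gt0).
have pow_ge0 : 0 <= \sum_i mahal_pow V i by apply: sumr_ge0 => i _; exact: expR_ge0.
have := ler_wnM2l (ltW kappa_lt0) sum_ln_ge.
move: F1_le; rewrite /precision_loglik -/kappa -/F1 => F1_le kappa_le.
rewrite -[\det V]lnK ?posrE ?posdef_det_gt0 // ler_expR.
rewrite -ler_pdivlMl ?divr_gt0 // invf_div.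
lra.
Qed.

(* [X] has full column rank, so [V = C (X V X^T) C^T] for a left inverse [C]
   of [X], and the entries of the Gram matrix [X V X^T] are bounded through
   Cauchy-Schwarz by its diagonal [mahal V i]. *)
Lemma posdef_entry_bound hi : 0 <= hi -> exists Bd, forall V, posdef V ->
  (forall i, mahal V i <= hi) -> forall k l, `|V k l| <= Bd.
Proof.
move=> hi_ge0; have /row_fullP[C CX] : row_full X by rewrite /row_full rankX.
set c := \sum_k \sum_i `|C k i|.
have C_le k i : `|C k i| <= c.
  apply: le_trans (ler_sum_term (F := fun i => `|C k i|) i _) _ => //.
  by apply: (ler_sum_term (F := fun k => \sum_i `|C k i|)) => k'; apply: sumr_ge0.
have c_ge0 : 0 <= c by apply: sumr_ge0 => k _; apply: sumr_ge0.
exists (n%:R * (n%:R * (c * hi) * c)) => V pV mahal_le k l.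
have -> : V = C *m (X *m V *m X^T) *m C^T.
  by rewrite !mulmxA CX mul1mx -mulmxA -trmx_mul CX trmx1 mulmx1.
have gram_le i j : `|(X *m V *m X^T) i j| <= hi.
  rewrite gram_mxE -(ler_pXn2r (n := 2)) ?nnegrE // real_normK ?num_real //.
  apply: le_trans (posdef_bform_CS _ _ pV) _; rewrite expr2.
  by apply: ler_pM; rewrite ?posdef_bform_ge0 ?mahal_le.
rewrite mxE (le_trans (ler_norm_sum _ _ _)) // -[n in n%:R * _]card_ord mulr_natl.
rewrite -sumr_const ler_sum // => j _; rewrite mxE normrM ler_pM // ?mxE ?C_le //.
rewrite (le_trans (ler_norm_sum _ _ _)) // -[n in n%:R * _]card_ord mulr_natl.
rewrite -sumr_const ler_sum // => i _; rewrite normrM ler_pM //.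
Qed.

Lemma superlevel_in_box : exists delta Bd, 0 < delta /\ forall V, posdef V ->
  precision_loglik 1%:M <= precision_loglik V -> posdef_box delta Bd (mxvec V).
Proof.
have [lo [hi [lo_gt0 mahal_bounds]]] := superlevel_mahal_bounds.
have [delta [delta_gt0 det_ge]] := superlevel_det_ge.
have hi_ge0 : 0 <= hi.
  have /andP[lo_le le_hi] := mahal_bounds _ (posdef1 R d) (lexx _) (Ordinal nobs_gt0).
  by rewrite (le_trans (ltW lo_gt0)) // (le_trans lo_le).
have [Bd entry_le] := posdef_entry_bound hi_ge0.
exists delta, Bd; split => // V pV F1_le; apply: mxvec_posdef_box => //.
  exact: det_ge.
by apply: entry_le => // i; have /andP[] := mahal_bounds V pV F1_le i.
Qed.

Lemma precision_loglik_continuous (u : 'rV[R]_(d * d)) : posdef (vec_mx u) ->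
  {for u, continuous (fun u => precision_loglik (vec_mx u))}.
Proof.
move=> pV; have t_cont i : continuous (fun u => mahal (vec_mx u) i).
  exact: bform_vec_mx_continuous.
have ln_cont (f : 'rV[R]_(d * d) -> R) :
    {for u, continuous f} -> 0 < f u -> {for u, continuous (fun v => ln (f v))}.
  by move=> f_cont f_gt0; apply: continuous_comp => //; exact: continuous_ln.
apply: continuousB; [apply: continuousD; apply: continuousM |];
  try exact: cst_continuous.
- by apply: ln_cont; [exact: det_vec_mx_continuous | exact: posdef_det_gt0].
- by apply: continuous_sum => i; apply: ln_cont; [exact: t_cont | exact: mahal_gt0].
apply: continuous_sum => i; apply: continuous_comp; last exact: continuous_expR.
apply: continuousM; first exact: cst_continuous.
apply: ln_cont; last by rewrite divr_gt0 ?mahal_gt0.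
by apply: continuousM; [exact: t_cont | exact: cst_continuous].
Qed.

End Kotz.

Theorem theorem45 (R : realType) (d n : nat) (alpha b beta : R)
  (X : 'M[R]_(n, d)) :
  0 < alpha -> 0 < b -> 0 < beta -> alpha < d%:R / 2 ->
  (forall i : 'I_n, row i X != 0) ->
  \rank X = d ->
  (forall L : 'M[R]_d, (1 <= \rank L)%N -> (\rank L < d)%N ->
     #|[set i : 'I_n | (row i X <= L)%MS]|%:R / n%:R
       < (\rank L)%:R / (d%:R - 2 * alpha)) ->
  exists S : 'M[R]_d, posdef S /\
    forall T : 'M[R]_d, posdef T ->
      kotz_loglik alpha b beta X T <= kotz_loglik alpha b beta X S.
Proof.
move=> alpha_gt0 b_gt0 beta_gt0 alpha_lt rowX_neq0 rankX subspace_frac_lt.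
set F := precision_loglik alpha b beta X.
have [delta [Bd [delta_gt0 in_box]]] := superlevel_in_box alpha_gt0 b_gt0 beta_gt0
  alpha_lt rowX_neq0 rankX subspace_frac_lt.
set K : set 'rV[R]_(d * d) := posdef_box delta Bd.
have K_posdef u : K u -> posdef (vec_mx u) by exact: posdef_box_posdef.
have K_neq0 : (K !=set0)%classic.
  by exists (mxvec (1%:M : 'M[R]_d)); apply: in_box (posdef1 R d) (lexx _).
have F_cont : {within K, continuous (F \o vec_mx)}%classic.
  rewrite continuous_subspace_in => u /set_mem u_K.
  apply: continuous_subspaceT_for => //.
  exact/(precision_loglik_continuous b_gt0 rowX_neq0)/K_posdef.
have [c /set_mem c_K c_max] :=
  compact_EVT_max K_neq0 (@compact_posdef_box R d delta Bd) F_cont.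
have F_le V : posdef V -> F 1%:M <= F V -> F V <= F (vec_mx c).
  move=> pV F1_le; have := c_max (mxvec V); rewrite /= mxvecK; apply.
  by rewrite inE; exact: in_box.
have S_posdef := posdef_invmx (K_posdef c c_K).
exists (invmx (vec_mx c)); split=> [//|T pT].
rewrite (kotz_loglik_precision alpha beta b_gt0 rowX_neq0 pT).
rewrite (kotz_loglik_precision alpha beta b_gt0 rowX_neq0 S_posdef) invmxK.
have T_posdef := posdef_invmx pT.
have [F1_le|F1_gt] := leP (F 1%:M) (F (invmx T)); first exact: F_le.
by apply: le_trans (ltW F1_gt) (F_le _ (posdef1 R d) (lexx _)).
Qed.
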